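(* For every integer $n\geq1$, $\mathrm{C}_{\{0,\ldots,n\}}\nleq_W\mathrm{C}_{\sharp\leq n}$.
   Context: Represented spaces carry partial surjections $\delta:\subseteq\mathbb{N}^\mathbb{N}\to X$; a realizer $F$ of $f$ satisfies $\delta_YF(p)\in f(\delta_X(p))$ for $p\in\operatorname{dom}(f\delta_X)$. $f\leq_W g$ iff there are computable partial $K,H$ on Baire space such that $p\mapsto K\langle p,G(H(p))\rangle$ realizes $f$ for every realizer $G$ of $g$. $\mathrm{C}_{\{0,\ldots,n\}}$ is closed choice on the discrete space $\{0,\ldots,n\}$ (given a non-empty subset by an enumeration of its complement, output an element). Closed subsets of Cantor space are named by binary trees (set of infinite paths); $\mathrm{C}_{\sharp\leq n}$ is the restriction of $\mathrm{C}_{\{0,1\}^\mathbb{N}}$ (output any point of the closed set) to trees having exactly $n$ vertices at each level $k$ with $2^k\geq n$. *)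

From mathcomp Require Import all_boot.
Set Implicit Arguments. Unset Strict Implicit. Unset Printing Implicit Defensive.

Inductive rcode : Type :=
  | RZero | RSucc | RProj of nat
  | RComp of rcode & list rcode
  | RPrimRec of rcode & rcode
  | RMu of rcode.

Inductive reval : rcode -> seq nat -> nat -> Prop :=
  | ev_zero v : reval RZero v 0
  | ev_succ v : reval RSucc v (head 0 v).+1
  | ev_proj i v : reval (RProj i) v (nth 0 v i)
  | ev_comp f gs v ws y :
      revals gs v ws -> reval f ws y -> reval (RComp f gs) v y
  | ev_rec0 f g v y : reval f v y -> reval (RPrimRec f g) (0 :: v) y
  | ev_recS f g x v y z :
      reval (RPrimRec f g) (x :: v) y -> reval g (x :: y :: v) z ->
      reval (RPrimRec f g) (x.+1 :: v) z
  | ev_mu f v x :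
      reval f (x :: v) 0 ->
      (forall y, y < x -> exists z, reval f (y :: v) z.+1) ->
      reval (RMu f) v x
with revals : seq rcode -> seq nat -> seq nat -> Prop :=
  | evs_nil v : revals [::] v [::]
  | evs_cons g gs v w ws :
      reval g v w -> revals gs v ws -> revals (g :: gs) v (w :: ws).

Definition baire := nat -> nat.

Definition cpair (x y : nat) : nat := (x + y) * (x + y).+1 %/ 2 + y.
Fixpoint enc (s : seq nat) : nat :=
  if s is x :: s' then (cpair x (enc s')).+1 else 0.

Definition prefix (p : baire) (k : nat) : seq nat := mkseq p k.

(* A partial function on Baire space F :<= N^N -> N^N is computable iff some
   machine computes it on dom(F): a partial recursive c which, asked for the
   n-th output digit after reading the prefix p|k, answers 0 ("not yet") or
   (digit)+1, answers correctly whenever it answers, and eventually answers. *)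
Definition computable_pf (F : baire -> option baire) : Prop :=
  exists c : rcode, forall p q, F p = Some q -> forall n,
    (exists k, reval c [:: n; enc (prefix p k)] (q n).+1) /\
    (forall k y, reval c [:: n; enc (prefix p k)] y -> y = 0 \/ y = (q n).+1).

Definition pairB (p q : baire) : baire :=
  fun i => if odd i then q i./2 else p i./2.

Record repspace := RepSpace {
  carrier :> Type;
  delta : baire -> carrier -> Prop
}.

Record problem (X Y : repspace) := Problem {
  pdom : X -> Prop;
  pval : X -> Y -> Prop
}.

Definition realizes (X Y : repspace) (f : problem X Y)
    (F : baire -> option baire) : Prop :=
  forall p x, delta p x -> pdom f x ->
    exists q, F p = Some q /\ exists y, delta q y /\ pval f x y.

Definition weihrauch_le (X Y X' Y' : repspace)
    (f : problem X Y) (g : problem X' Y') : Prop :=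
  exists K H : baire -> option baire,
    computable_pf K /\ computable_pf H /\
    forall G : baire -> option baire, realizes g G ->
      realizes f (fun p => match H p with
                           | Some r => match G r with
                                       | Some s => K (pairB p s)
                                       | None => None
                                       end
                           | None => None
                           end).

Definition rep_fin (n : nat) : repspace :=
  @RepSpace 'I_n.+1 (fun p k => p 0 = k).

(* closed subsets of {0,...,n}, named by an enumeration of the complement:
   p names A iff k \notin A exactly when k+1 occurs in the range of p *)
Definition rep_closed_fin (n : nat) : repspace :=
  @RepSpace {set 'I_n.+1}
    (fun p A => forall k : 'I_n.+1, k \notin A <-> exists i, p i = k.+1).

Definition C_fin (n : nat) : problem (rep_closed_fin n) (rep_fin n) :=
  @Problem (rep_closed_fin n) (rep_fin n)
    (fun A => A != set0) (fun A k => k \in A).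

(* coding of binary words as naturals: w |-> (binary value of 1w) - 1 *)
Definition wcode (w : seq bool) : nat :=
  (foldl (fun a (b : bool) => a.*2 + b) 1 w).-1.

Definition rep_tree : repspace :=
  @RepSpace (seq bool -> bool) (fun p T => forall w, p (wcode w) = T w).

Definition rep_cantor : repspace :=
  @RepSpace (nat -> bool) (fun p x => forall i, p i = x i).

Definition is_tree (T : seq bool -> bool) : Prop :=
  forall w v, T (w ++ v) -> T w.

Definition is_path (T : seq bool -> bool) (x : nat -> bool) : Prop :=
  forall k, T (mkseq x k).

Definition level_card (n : nat) (T : seq bool -> bool) : Prop :=
  forall k, n <= 2 ^ k -> #|[set t : k.-tuple bool | T t]| = n.

Definition C_sharp (n : nat) : problem rep_tree rep_cantor :=
  @Problem rep_tree rep_cantor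
    (fun T => is_tree T /\ level_card n T) (fun T x => is_path T x).

From Pilot Require Import Defs.
From mathcomp Require Import all_boot zify.
From Stdlib Require Import Classical ClassicalEpsilon FunctionalExtensionality.
Set Implicit Arguments. Unset Strict Implicit. Unset Printing Implicit Defensive.

(* Suppose K and H witness the reduction. On the all-zero name of the full set
   {0,...,n}, H produces a tree with n nodes per level, hence with at most n paths,
   and along each path K commits to an answer after reading finitely much. By
   Koenig's lemma every node deep enough in that tree lies on one of these paths, so
   by continuity of H a long enough all-zero prefix forces every run of the reduction
   to answer in a set J of at most n values. Enumerating the elements of J into the
   complement one at a time keeps the named set nonempty, but each step makes one
   more answer wrong; once J is exhausted, no answer is left. *)

Lemma uniform_bound (I : finType) (P : I -> nat -> Prop) :
  (forall i l l', l <= l' -> P i l -> P i l') ->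
  (forall i, exists l, P i l) -> exists L, forall i, P i L.
Proof.
move=> mono ex.
suff [L PL] : exists L, forall i, i \in enum I -> P i L.
  by exists L => i; apply: PL; rewrite mem_enum.
elim: (enum I) => [|j s [L PL]]; first by exists 0.
have [l Pl] := ex j.
exists (maxn l L) => i /predU1P [-> | i_s].
  by apply: mono Pl; rewrite leq_maxl.
by apply: mono (PL i i_s); rewrite leq_maxr.
Qed.

Lemma take_mkseq T (f : nat -> T) i n : i <= n -> take i (mkseq f n) = mkseq f i.
Proof. by move=> le_in; rewrite /mkseq -map_take take_iota (minn_idPl le_in). Qed.

Section Trees.
Variable T : seq bool -> bool.
Hypothesis treeT : is_tree T.

Lemma tree_take w v l : T (w ++ v) -> T (w ++ take l v).
Proof. by rewrite -{1}(cat_take_drop l v) catA; apply: treeT. Qed.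

Definition unbounded (w : seq bool) := forall l, exists2 v, size v = l & T (w ++ v).

Lemma unbounded_child w : unbounded w -> exists b, unbounded (rcons w b).
Proof.
move=> uw; apply: NNPP => none.
have dead b : exists l, forall v, size v = l -> ~~ T (rcons w b ++ v).
  apply: NNPP => alive; apply: none; exists b => l; apply: NNPP => dead_l.
  apply: alive; exists l => v sv; apply/negP => Tv; apply: dead_l; by exists v.
have [l0 dead0] := dead false; have [l1 dead1] := dead true.
have [[|b v] // [sv]] := uw (maxn l0 l1).+1; rewrite -cat_rcons => Tv.
have size_take l : l <= maxn l0 l1 -> size (take l v) = l.
  by move=> le_l; rewrite size_takel // sv.
case: b Tv => Tv.
- by move: (dead1 _ (size_take _ (leq_maxr _ _))); rewrite tree_take.
- by move: (dead0 _ (size_take _ (leq_maxl _ _))); rewrite tree_take.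
Qed.

Definition grow (w : seq bool) : seq bool :=
  rcons w (if excluded_middle_informative (unbounded (rcons w false))
           then false else true).

Lemma unbounded_grow w : unbounded w -> unbounded (grow w).
Proof.
rewrite /grow; case: excluded_middle_informative => // not_false uw.
by have [[] ub] := unbounded_child uw; last case: (not_false ub).
Qed.

Lemma konig w : unbounded w -> exists2 y, is_path T y & mkseq y (size w) = w.
Proof.
move=> uw; pose W k := iter k grow w.
have W_unbounded k : unbounded (W k) by elim: k => //= k; apply: unbounded_grow.
have size_W k : size (W k) = size w + k.
  by elim: k => [|k IH]; rewrite ?addn0 //= size_rcons IH addnS.
have W_cat k d : exists s, W (k + d) = W k ++ s.
  elim: d => [|d [s E]]; first by exists [::]; rewrite addn0 cats0.
  by rewrite addnS /= -/(W _) E /grow rcons_cat; eexists.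
pose y i := nth false (W i.+1) i.
have W_nth i l : i < l -> nth false (W l) i = y i.
  move=> il; have [s E] := W_cat i.+1 (l - i.+1).
  by rewrite -(subnKC il) E nth_cat size_W (ltn_addl _ (ltnSn i)).
have mkseq_W l : mkseq y l = take l (W l).
  apply: (@eq_from_nth _ false); first by rewrite size_mkseq size_takel // size_W leq_addl.
  by move=> i; rewrite size_mkseq => il; rewrite nth_mkseq // nth_take // W_nth.
exists y => [l|]; rewrite mkseq_W.
- have [v /size0nil -> ] := W_unbounded l 0.
  by rewrite cats0 -{1}(cat_take_drop l (W l)); apply: treeT.
- by have [s E] := W_cat 0 (size w); rewrite add0n in E; rewrite E take_size_cat.
Qed.

Lemma deep_nodes_on_paths E : exists L, forall w, size w = E + L -> T w ->
  exists2 y, is_path T y & mkseq y E = take E w.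
Proof.
pose Q (t : E.-tuple bool) L :=
  (exists2 y, is_path T y & mkseq y E = t) \/ forall v, size v = L -> ~~ T (t ++ v).
have [t l l' ll' [on_path|dead]|t|L QL] := @uniform_bound _ Q; first by left.
- right => v sv; apply/negP => /(tree_take l).
  by rewrite (negbTE (dead _ _)) // size_takel // sv.
- case: (classic (unbounded t)) => [/konig [y Py]|not_unb].
    by rewrite size_tuple => yt; exists 0; left; exists y.
  have [l dead] := not_all_ex_not _ _ not_unb.
  exists l; right => v sv; apply/negP => Tv; apply: dead; by exists v.
exists L => w sw Tw.
have take_size : size (take E w) == E by rewrite size_takel // sw leq_addr.
have [] := QL (Tuple take_size) => [[y Py /= yE]|dead]; first by exists y.
move: Tw; rewrite -(cat_take_drop E w) => Tw.
by move: (dead (drop E w)); rewrite /= Tw size_drop sw addKn => /(_ erefl).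
Qed.

End Trees.

Lemma level_card_path n T : is_tree T -> level_card n T -> 0 < n -> exists y, is_path T y.
Proof.
move=> treeT lT n_gt0.
suff /(konig treeT) [y Py _] : unbounded T [::] by exists y.
move=> l; have /card_gt0P [t] : 0 < #|[set t : (l + n).-tuple bool | T t]|.
  by rewrite lT // (leq_trans (leq_addl l n) (ltnW (ltn_expl _ (isT : 1 < 2)))).
rewrite inE => Tt; exists (take l t); first by rewrite size_takel // size_tuple leq_addr.
exact: (@tree_take T treeT [::] t).
Qed.

Lemma distinct_paths_le n T m (z : nat -> nat -> bool) : level_card n T ->
  (forall i, i < m -> is_path T (z i)) ->
  (forall i j, i < m -> j < m -> z i = z j -> i = j) -> m <= n.
Proof.
move=> lT Pz inj_z.
pose Q (ij : 'I_m * 'I_m) L :=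
  ij.1 = ij.2 :> nat \/ exists2 k, k < L & z ij.1 k != z ij.2 k.
have [ij l l' ll' [eq_ij|[k kl ne]]|[i j]|L sep] := @uniform_bound _ Q; first by left.
- by right; exists k => //; apply: leq_trans ll'.
- case: (eqVneq (i : nat) j) => [eq_ij|ne_ij]; first by exists 0; left.
  have [k ne_k] : exists k, z i k <> z j k.
    apply: NNPP => agree; move/eqP: ne_ij; apply.
    apply: inj_z => //; apply: functional_extensionality => k.
    by apply: NNPP => ne_k; apply: agree; exists k.
  by exists k.+1; right; exists k => //; apply/eqP.
pose L' := maxn L n.
pose g (i : 'I_m) : L'.-tuple bool := Tuple (introT eqP (size_mkseq (z i) L')).
have g_inj : injective g.
  move=> i j /(congr1 val) /= eq_ij; apply: val_inj.
  have [//|[k kL]] := sep (i, j); apply: contraNeq => _ /=.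
  have := congr1 (nth false ^~ k) eq_ij.
  by rewrite !nth_mkseq ?(leq_trans kL (leq_maxl _ _)) // => ->.
rewrite -[m]card_ord -(card_imset _ g_inj) -(lT L'); last first.
  exact: leq_trans (leq_maxr L n) (ltnW (ltn_expl _ (isT : 1 < 2))).
apply: subset_leq_card; apply/subsetP => _ /imsetP [i _ ->].
by rewrite inE; apply: Pz.
Qed.

Lemma level_card_paths_finite n T : level_card n T ->
  exists m (z : nat -> nat -> bool), [/\ m <= n, forall i, i < m -> is_path T (z i)
    & forall y, is_path T y -> exists2 i, i < m & z i = y].
Proof.
move=> lT.
suff: forall d m z, n - m < d -> (forall i, i < m -> is_path T (z i)) ->
    (forall i j, i < m -> j < m -> z i = z j -> i = j) ->
    exists m (z : nat -> nat -> bool), [/\ m <= n, forall i, i < m -> is_path T (z i)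
      & forall y, is_path T y -> exists2 i, i < m & z i = y].
  by move=> /(_ n.+1 0 (fun _ _ => false)); apply=> [|i|i j]; rewrite ?subn0 ?ltn0.
elim=> [|d IH] m z // lt_d Pz inj_z.
have [cover|] := classic (forall y, is_path T y -> exists2 i, i < m & z i = y).
  by exists m, z; split=> //; apply: distinct_paths_le lT Pz inj_z.
move=> /not_all_ex_not [y] /(imply_to_and (is_path T y)) [Py new_y].
pose z' i := if i == m then y else z i.
have Pz' i : i < m.+1 -> is_path T (z' i).
  by rewrite /z'; case: eqVneq => // ne_im lt_im; apply: Pz; lia.
have inj_z' i j : i < m.+1 -> j < m.+1 -> z' i = z' j -> i = j.
  rewrite /z' => lt_im lt_jm.
  case: (eqVneq i m) => [->|ne_im]; case: (eqVneq j m) => [->|ne_jm] //.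
  - by move=> y_z; case: new_y; exists j => //; lia.
  - by move=> z_y; case: new_y; exists i => //; lia.
  - by apply: inj_z; lia.
apply: (IH m.+1 z') => //.
have := distinct_paths_le lT Pz' inj_z'; lia.
Qed.

Definition computed_by (c : rcode) (F : baire -> option baire) : Prop :=
  forall p q, F p = Some q -> forall m,
    (exists k, reval c [:: m; enc (Defs.prefix p k)] (q m).+1) /\
    (forall k y, reval c [:: m; enc (Defs.prefix p k)] y -> y = 0 \/ y = (q m).+1).

Lemma eq_prefix (p p' : baire) k :
  (forall i, i < k -> p i = p' i) -> Defs.prefix p k = Defs.prefix p' k.
Proof. by move=> agree; apply/eq_in_map => i; rewrite mem_iota => /andP [_ /agree]. Qed.

Lemma computable_continuous F p q i : computable_pf F -> F p = Some q ->
  exists M, forall p' q', (forall j, j < M -> p' j = p j) -> F p' = Some q' -> q' i = q i.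
Proof.
move=> [c F_c] Fp; have [[k run] _] := F_c p q Fp i.
exists k => p' q' agree Fp'; have [_ sound] := F_c p' q' Fp' i.
by move: run; rewrite -(eq_prefix agree) => /sound [//|[]].
Qed.

(* [c] announces the first output digit [a] after reading [k] input digits *)
Definition answers (c : rcode) (p : baire) k a := reval c [:: 0; enc (Defs.prefix p k)] a.+1.

Lemma computed_by_answers c F p q : computed_by c F -> F p = Some q ->
  exists k, answers c p k (q 0).
Proof. by move=> F_c Fp; have [[k run] _] := F_c p q Fp 0; exists k. Qed.

Lemma answers_sound c F p q k a : computed_by c F -> F p = Some q ->
  answers c p k a -> a = q 0.
Proof. by move=> F_c Fp /(F_c p q Fp 0).2 [//|[]]. Qed.

Lemma answers_agree c p p' k a : (forall i, i < k -> p i = p' i) ->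
  answers c p k a -> answers c p' k a.
Proof. by move=> agree; rewrite /answers (eq_prefix agree). Qed.

Definition tree_of (r : baire) : seq bool -> bool := fun w => r (wcode w) == 1.

Definition bits (y : nat -> bool) : baire := fun i => y i.

Lemma tree_of_name r (T : rep_tree) : delta r T -> T = tree_of r.
Proof.
by move=> rT; apply: functional_extensionality => w; rewrite /tree_of rT; case: (T w).
Qed.

Definition path_realizer n (sel : baire -> nat -> bool) : baire -> option baire :=
  fun r => if excluded_middle_informative (pdom (C_sharp n) (tree_of r))
           then Some (bits (sel r)) else None.

Lemma path_realizerP n sel :
  (forall r, pdom (C_sharp n) (tree_of r) -> is_path (tree_of r) (sel r)) ->
  realizes (C_sharp n) (path_realizer n sel).
Proof.
move=> sel_path r T /tree_of_name -> domT; rewrite /path_realizer.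
case: excluded_middle_informative => [?|//] /=.
by exists (bits (sel r)); split=> //; exists (sel r); split=> //; apply: sel_path.
Qed.

Lemma path_realizer_dom n sel r s : path_realizer n sel r = Some s ->
  pdom (C_sharp n) (tree_of r).
Proof. by rewrite /path_realizer; case: excluded_middle_informative. Qed.

Definition some_path (r : baire) : nat -> bool :=
  epsilon (inhabits (fun _ => false)) (is_path (tree_of r)).

Lemma some_pathP n : 0 < n ->
  forall r, pdom (C_sharp n) (tree_of r) -> is_path (tree_of r) (some_path r).
Proof. by move=> n_gt0 r [treeT lT]; apply: epsilon_spec; apply: level_card_path n_gt0. Qed.

Definition reduce (K H G : baire -> option baire) : baire -> option baire :=
  fun p => match H p with
           | Some r => match G r with Some s => K (pairB p s) | None => None end
           | None => None
           end.

Section Reduction.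
Variables (n : nat) (K H : baire -> option baire) (cK : rcode).
Hypothesis n_gt0 : 0 < n.
Hypothesis K_cK : computed_by cK K.
Hypothesis H_comp : computable_pf H.
Hypothesis reduction : forall G, realizes (C_sharp n) G -> realizes (C_fin n) (reduce K H G).

(* Since [G] may return any path of the tree, every path must lead [K] to a valid answer. *)
Lemma reduction_paths p (A : {set 'I_n.+1}) :
  @delta (rep_closed_fin n) p A -> A != set0 ->
  exists r, [/\ H p = Some r, pdom (C_sharp n) (tree_of r)
    & forall y, is_path (tree_of r) y -> exists2 q, K (pairB p (bits y)) = Some q
        & exists2 k : 'I_n.+1, q 0 = k & k \in A].
Proof.
move=> pA A_ne.
have [q [] ] := reduction (path_realizerP (some_pathP n_gt0)) pA A_ne.
rewrite /reduce; case Hp: (H p) => [r|//].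
case Gr: (path_realizer _ _ r) => [s|//] _ _.
exists r; split=> //; first exact: path_realizer_dom Gr.
move=> y Py.
pose sel r' := if excluded_middle_informative (r' = r) then y else some_path r'.
have sel_path r' : pdom (C_sharp n) (tree_of r') -> is_path (tree_of r') (sel r').
  rewrite /sel; case: excluded_middle_informative => [e|_] /=; last exact: some_pathP.
  by rewrite e.
have [q' [] ] := reduction (path_realizerP sel_path) pA A_ne.
rewrite /reduce Hp /path_realizer /sel.
case: excluded_middle_informative => [?|//]; case: excluded_middle_informative => [? /= Kq'|[]//].
by move=> [k [qk kA]]; exists q' => //; exists k.
Qed.

Definition answers_in (u J : seq nat) : Prop :=
  forall p (A : {set 'I_n.+1}) r y,
    (forall i, i < size u -> p i = nth 0 u i) ->
    @delta (rep_closed_fin n) p A -> A != set0 ->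
    H p = Some r -> is_path (tree_of r) y ->
    exists2 a, a \in J & exists k, answers cK (pairB p (bits y)) k a.

(* Enumerating [j] into the complement makes the answer [j] wrong. *)
Lemma answers_in_remove u j J : answers_in u (j :: J) -> answers_in (rcons u j.+1) J.
Proof.
move=> IJ p A r y pu pA A_ne Hp Py.
have pu' i : i < size u -> p i = nth 0 u i.
  by move=> iu; have := pu i; rewrite size_rcons nth_rcons iu; apply; apply: ltnW.
have [a] := IJ p A r y pu' pA A_ne Hp Py.
rewrite inE => /predU1P [-> [k ans_j] | aJ ans]; last by exists a.
have [r' [Hp' _ K_paths]] := reduction_paths pA A_ne.
move: Hp'; rewrite Hp => -[eq_r]; rewrite -eq_r in K_paths.
have [q Kq [i qi iA]] := K_paths y Py.
have j_i : j = i by rewrite (answers_sound K_cK Kq ans_j).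
have : i \notin A.
  by apply/pA; exists (size u); rewrite pu ?size_rcons // nth_rcons ltnn eqxx j_i.
by rewrite iA.
Qed.

Lemma answers_in_nil u : count (predC1 0) u <= n -> ~ answers_in u [::].
Proof.
move=> few IJ.
pose A := [set k : 'I_n.+1 | k.+1 \notin u].
have pA : @delta (rep_closed_fin n) (nth 0 u) A.
  move=> k; rewrite inE negbK; split=> [ku | [i ui]].
    by exists (index k.+1 u); rewrite nth_index.
  case: (ltnP i (size u)) => [iu|ui_size]; first by rewrite -ui mem_nth.
  by move: ui; rewrite nth_default.
have A_ne : A != set0.
  apply/set0Pn; apply: NNPP => A_empty.
  have in_u (k : 'I_n.+1) : k.+1 \in u.
    by apply: NNPP => k_nu; apply: A_empty; exists k; rewrite inE; apply/negP.
  suff : n.+1 <= count (predC1 0) u by lia.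
  rewrite -size_filter -[n.+1](size_iota 1).
  apply: uniq_leq_size (iota_uniq _ _) _ => x; rewrite mem_iota mem_filter => x_range.
  have x_gt0 : 0 < x by lia.
  have x_ord : x.-1 < n.+1 by lia.
  by have := in_u (Ordinal x_ord); rewrite /= prednK // -lt0n x_gt0 => ->.
have [r [Hp [treeT lT] _]] := reduction_paths pA A_ne.
have [y Py] := level_card_path treeT lT n_gt0.
by have [] := IJ (nth 0 u) A r y (fun i _ => erefl) pA A_ne Hp Py.
Qed.

Lemma answers_in_exhaust J u : answers_in u J -> count (predC1 0) u + size J <= n -> False.
Proof.
elim: J u => [|j J IH] u IJ bound.
  by apply: (answers_in_nil _ IJ); rewrite addn0 in bound.
apply: (IH _ (answers_in_remove IJ)).
by move: bound; rewrite -cats1 count_cat /=; lia.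
Qed.

Lemma answers_in_zeros : exists m J, size J <= n /\ answers_in (nseq m 0) J.
Proof.
pose p0 : baire := fun _ => 0.
have p0_full : @delta (rep_closed_fin n) p0 setT by move=> k; rewrite inE; split=> // -[].
have setT_ne : [set: 'I_n.+1] != set0 by apply/set0Pn; exists ord0; rewrite inE.
have [r0 [Hp0 [treeT0 lT0] K_paths0]] := reduction_paths p0_full setT_ne.
have [m [z [m_le Pz cover]]] := level_card_paths_finite lT0.
pose answers_z (i : 'I_m) k a := answers cK (pairB p0 (bits (z i))) k a.
pose a i := epsilon (inhabits 0) (fun a => exists k, answers_z i k a).
have [E ans_E] : exists E, forall i, exists2 k, k <= E & answers_z i k (a i).
  apply: uniform_bound => [i l l' ll' [k kl ans]|i]; first by exists k => //; apply: leq_trans ll'.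
  have [k ans] : exists k, answers_z i k (a i).
    apply: (epsilon_spec _ (fun a => exists k, answers_z i k a)).
    have [q Kq _] := K_paths0 _ (Pz _ (ltn_ord i)).
    by have [k ans] := computed_by_answers K_cK Kq; exists (q 0), k.
  by exists k, k.
have [L deep] := deep_nodes_on_paths treeT0 E.
have [M H_agree] : exists M, forall (w : (E + L).-tuple bool) p r,
    (forall j, j < M -> p j = p0 j) -> H p = Some r -> r (wcode w) = r0 (wcode w).
  apply: uniform_bound => [w l l' ll' agree p r pl|w]; first by apply: agree => j jl; apply: pl; apply: leq_trans ll'.
  exact: (computable_continuous (wcode w) H_comp Hp0).
exists (maxn M E), [seq a i | i <- enum 'I_m]; split; first by rewrite size_map size_enum_ord.
move=> p A r y p_zero _ _ Hp Py.
have p_p0 j : j < maxn M E -> p j = p0 j.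
  by move=> j_lt; rewrite p_zero ?size_nseq // nth_nseq j_lt.
have [y0 Py0 y0_y] : exists2 y0, is_path (tree_of r0) y0 & mkseq y0 E = mkseq y E.
  have sw : size (mkseq y (E + L)) == E + L by rewrite size_mkseq.
  rewrite -(take_mkseq y (leq_addr L E)); apply: deep; first exact/eqP.
  rewrite /tree_of -(H_agree (Tuple sw) p r) //; first exact: Py.
  by move=> j jM; apply: p_p0; apply: leq_trans jM (leq_maxl _ _).
have [i i_m z_y0] := cover y0 Py0; rewrite -z_y0 in y0_y.
have [k k_E ans] := ans_E (Ordinal i_m).
exists (a (Ordinal i_m)); first by rewrite map_f ?mem_enum.
exists k; apply: answers_agree ans => j j_k.
have j2_E : j./2 < E by rewrite ltn_half_double; lia.
rewrite /pairB; case: odd.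
- by have := congr1 (nth false ^~ j./2) y0_y; rewrite !nth_mkseq // /bits => ->.
- by rewrite p_p0 // (leq_trans j2_E (leq_maxr _ _)).
Qed.

End Reduction.

Theorem proposition26 (n : nat) : 1 <= n -> ~ weihrauch_le (C_fin n) (C_sharp n).
Proof.
move=> n_gt0 [K [H [[cK K_cK] [H_comp reduction]]]].
have [m [J [J_le answers_J]]] := answers_in_zeros n_gt0 K_cK H_comp reduction.
apply: (answers_in_exhaust n_gt0 K_cK reduction answers_J).
by rewrite count_nseq /= mul0n.
Qed.
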